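(* Let $f:\mathbb{R}\to\mathbb{R}$ be a function, let $I\subset\mathbb{R}$ be an interval, and let $\Phi$ be a Young function satisfying the $\nabla_2$-condition. If there exists $D>0$ such that \[ |f(x)-f(y)|\le\left\{\Phi\left(\frac{1}{D|x-y|}\right)\right\}^{-1} \] for all $x,y\in I$ with $x\neq y$, then $f$ is constant on $I$.
   Context: A Young function is a map $\Phi:[0,\infty)\to[0,\infty)$ that is positive on $(0,\infty)$, convex, with $\lim_{t\downarrow0}\Phi(t)=\Phi(0)=0$. $\Phi$ satisfies the $\nabla_2$-condition if there is a constant $k>1$ with $\Phi(t)\le\frac{1}{2k}\Phi(kt)$ for all $t>0$. *)

From HB Require Import structures.
From mathcomp Require Import all_boot all_order all_algebra.
From mathcomp Require Import all_classical all_reals all_analysis.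
Set Implicit Arguments. Unset Strict Implicit. Unset Printing Implicit Defensive.
Import Order.TTheory GRing.Theory Num.Theory.
Import numFieldNormedType.Exports.
Local Open Scope ring_scope.
Local Open Scope classical_set_scope.

(* A Young function Phi : [0,oo) -> [0,oo), represented as Phi : R -> R whose
   values outside [0,oo) are irrelevant. *)
Definition young_function (R : realType) (Phi : R -> R) : Prop :=
  [/\ Phi 0 = 0,
      (forall t : R, 0 < t -> 0 < Phi t),
      (forall (x y l : R), 0 <= x -> 0 <= y -> 0 <= l -> l <= 1 ->
          Phi (l * x + (1 - l) * y) <= l * Phi x + (1 - l) * Phi y) &
      Phi t @[t --> 0^'+] --> 0].

Definition nabla2 (R : realType) (Phi : R -> R) : Prop :=
  exists k : R, 1 < k /\ forall t : R, 0 < t -> Phi t <= (2 * k)^-1 * Phi (k * t).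

From HB Require Import structures.
From mathcomp Require Import all_boot all_order all_algebra.
From mathcomp Require Import all_classical all_reals all_analysis.
From mathcomp Require Import ring lra.
Import Order.TTheory GRing.Theory Num.Theory.
Import numFieldNormedType.Exports.
Local Open Scope ring_scope.

(* Cutting [x, y] into N equal steps, the hypothesis gives
   |f x - f y| <= N / Phi (N a) with a = 1 / (D |x - y|).  Convexity and
   Phi 0 = 0 give Phi (s t) >= s Phi t for s >= 1, and iterating nabla_2 gives
   Phi (k^n t) >= (2k)^n Phi t; hence Phi (N a) / N >= 2^n Phi a once N >= k^n.
   So Phi (N a) / N is unbounded and f x = f y. *)

Section ChainBound.
Context {R : realType}.

Lemma line_path_in_itv (I : interval R) (x y t : R) :
  x \in I -> y \in I -> 0 <= t <= 1 -> line_path x y t \in I.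
Proof.
wlog le_xy : x y t / x <= y => [hwlog xI yI t01|xI yI t01].
  have [|/ltW le_yx] := lerP x y; first by move=> le_xy; apply: hwlog.
  rewrite line_path_sym; apply: hwlog => //.
  by case/andP: t01 => t0 t1; apply/andP; split; lra.
have xyt : line_path x y t \in `[x, y] by apply: mem_line_path_itvcc; rewrite ?in_itv.
by apply: (interval_is_interval xI yI); rewrite in_itv /= in xyt.
Qed.

Lemma chain_bound {f : R -> R} {I : interval R} (w : R -> R) {x y : R} {N : nat} :
  (forall u v, u \in I -> v \in I -> u != v -> `|f u - f v| <= w `|u - v|) ->
  x \in I -> y \in I -> x != y -> (0 < N)%N ->
  `|f x - f y| <= N%:R * w (`|x - y| / N%:R).
Proof.
move=> hf xI yI xy N_gt0.
have N0 : N%:R != 0 :> R by rewrite pnatr_eq0 -lt0n.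
pose z (m : nat) := line_path x y (m%:R / N%:R).
have zI m : (m <= N)%N -> z m \in I.
  move=> le_mN; apply: line_path_in_itv => //.
  by rewrite divr_ge0 //= ler_pdivrMr ?ltr0n // mul1r ler_nat.
have z_step m : z m - z m.+1 = (x - y) / N%:R.
  by rewrite /z !line_pathEl -addn1 natrD; field.
have step m : (m < N)%N -> `|f (z m) - f (z m.+1)| <= w (`|x - y| / N%:R).
  move=> lt_mN.
  have zz : z m != z m.+1.
    by rewrite -subr_eq0 z_step mulf_neq0 ?invr_eq0 // subr_eq0.
  have -> : `|x - y| / N%:R = `|z m - z m.+1|.
    by rewrite z_step normrM normfV normr_nat.
  exact: hf (zI _ (ltnW lt_mN)) (zI _ lt_mN) zz.
have tele m : (m <= N)%N -> `|f x - f (z m)| <= m%:R * w (`|x - y| / N%:R).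
  elim: m => [|m IH] le_mN.
    by rewrite /z mul0r line_path0 subrr normr0 mul0r.
  apply: le_trans (ler_distD (f (z m)) _ _) _.
  rewrite mulrSr mulrDl mul1r.
  by apply: lerD; [exact: IH (ltnW le_mN) | exact: step].
by have := tele N (leqnn N); rewrite /z divff // line_path1.
Qed.

End ChainBound.

Section YoungGrowth.
Context {R : realType} {Phi : R -> R}.

Lemma young_scale_le (s t : R) :
  young_function Phi -> 1 <= s -> 0 <= t -> s * Phi t <= Phi (s * t).
Proof.
case=> Phi0 _ Phi_conv _ s_ge1 t_ge0.
have s_gt0 : 0 < s by lra.
have := Phi_conv (s * t) 0 s^-1 (mulr_ge0 (ltW s_gt0) t_ge0) (lexx 0).
rewrite invr_ge0 ltW // invf_le1 // => /(_ isT s_ge1).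
rewrite !mulr0 !addr0 Phi0 mulr0 addr0 mulKf ?gt_eqF // => H.
by rewrite -ler_pdivlMl // mulrC.
Qed.

Lemma nabla2_iter (k t : R) (n : nat) :
  1 < k -> (forall u, 0 < u -> Phi u <= (2 * k)^-1 * Phi (k * u)) -> 0 < t ->
  (2 * k) ^+ n * Phi t <= Phi (k ^+ n * t).
Proof.
move=> k_gt1 hk t_gt0; elim: n => [|n IH]; first by rewrite !expr0 !mul1r.
have k2_gt0 : 0 < 2 * k by lra.
have := hk (k ^+ n * t) (mulr_gt0 (exprn_gt0 _ (lt_trans ltr01 k_gt1)) t_gt0).
rewrite -(ler_pM2l k2_gt0) mulVKf ?gt_eqF // mulrA -exprS.
by apply: le_trans; rewrite exprS -mulrA ler_pM2l.
Qed.

Lemma young_nabla2_ratio_ge (k a : R) (n N : nat) :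
  young_function Phi -> 1 < k ->
  (forall u, 0 < u -> Phi u <= (2 * k)^-1 * Phi (k * u)) -> 0 < a ->
  k ^+ n <= N%:R -> 2 ^+ n * Phi a <= Phi (N%:R * a) / N%:R.
Proof.
move=> hPhi k_gt1 hk a_gt0 le_kN.
have kn_gt0 : 0 < k ^+ n by rewrite exprn_gt0 // (lt_trans ltr01).
have N_gt0 : 0 < N%:R :> R by exact: lt_le_trans le_kN.
have scale : N%:R / k ^+ n * Phi (k ^+ n * a) <= Phi (N%:R * a).
  have := young_scale_le (N%:R / k ^+ n) (k ^+ n * a) hPhi.
  rewrite mulrA divfK ?gt_eqF //; apply.
    by rewrite ler_pdivlMr // mul1r.
  by rewrite mulr_ge0 // ltW.
rewrite ler_pdivlMr // mulrC; apply: le_trans scale.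
have Nk_ge0 : 0 <= N%:R / k ^+ n by rewrite ltW // divr_gt0.
have := ler_wpM2l Nk_ge0 (nabla2_iter k a n k_gt1 hk a_gt0); apply: le_trans.
by rewrite exprMn le_eqVlt; apply/orP; left; apply/eqP; field; rewrite gt_eqF.
Qed.

Lemma young_nabla2_unbounded (a M : R) :
  young_function Phi -> nabla2 Phi -> 0 < a ->
  exists2 N : nat, (0 < N)%N & M <= Phi (N%:R * a) / N%:R.
Proof.
move=> hPhi [k [k_gt1 hk]] a_gt0.
have Pa_gt0 : 0 < Phi a by case: hPhi => _ Phi_gt0 _ _; exact: Phi_gt0.
pose n := Num.Def.archi_bound (`|M| / Phi a).
have M_le : M <= 2 ^+ n * Phi a.
  have := archi_boundP (divr_ge0 (normr_ge0 M) (ltW Pa_gt0)).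
  rewrite ltr_pdivrMr // => lt_M.
  apply: le_trans (ler_norm M) (ltW (lt_le_trans lt_M _)).
  by rewrite ler_pM2r // -natrX ler_nat ltnW // ltn_expl.
pose N := Num.Def.archi_bound (k ^+ n).
have k_gt0 : 0 < k by lra.
have lt_kN : k ^+ n < N%:R by apply/archi_boundP; rewrite exprn_ge0 // ltW.
exists N; first by rewrite -(ltr0n R) (lt_trans _ lt_kN) // exprn_gt0.
exact: le_trans M_le (young_nabla2_ratio_ge k a n N hPhi k_gt1 hk a_gt0 (ltW lt_kN)).
Qed.

End YoungGrowth.

Theorem lemma5p4 (R : realType) (f : R -> R) (I : interval R) (Phi : R -> R)
  (hPhi : young_function Phi) (hnab : nabla2 Phi)
  (D : R) (hD : 0 < D)
  (hf : forall x y : R, x \in I -> y \in I -> x != y ->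
          `|f x - f y| <= (Phi ((D * `|x - y|)^-1))^-1) :
  forall x y : R, x \in I -> y \in I -> f x = f y.
Proof.
move=> x y xI yI; have [-> //|xy] := eqVneq x y.
have h_gt0 : 0 < `|x - y| by rewrite normr_gt0 subr_eq0.
set a := (D * `|x - y|)^-1.
have a_gt0 : 0 < a by rewrite invr_gt0 mulr_gt0.
set c := `|f x - f y|; have : 0 <= c := normr_ge0 _.
rewrite le_eqVlt => /predU1P[/esym/eqP|c_gt0].
  by rewrite normr_eq0 subr_eq0 => /eqP.
have [N N_gt0 growth] := young_nabla2_unbounded a (2 / c) hPhi hnab a_gt0.
have N0 : 0 < N%:R :> R by rewrite ltr0n.
have PNa_gt0 : 0 < Phi (N%:R * a).
  by case: hPhi => _ Ppos _ _; apply/Ppos/mulr_gt0.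
have := chain_bound (fun r => (Phi ((D * r)^-1))^-1) hf xI yI xy N_gt0.
have -> : (D * (`|x - y| / N%:R))^-1 = N%:R * a by rewrite /a; field; rewrite !gt_eqF.
rewrite -/c -invf_div => c_le.
have : c <= c / 2.
  apply: le_trans c_le _; rewrite -[c / 2]invf_div lef_pV2 ?posrE ?divr_gt0 //.
lra.
Qed.
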